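(* For $n\geq1$ let $\ell_n=\sqrt[n]{n!}$ and $x_n=\log(\ell_{n+1}/\ell_n)$. Then for every integer $n\geq 271$, $$0\leq x_{n+1}+x_n\leq \frac2n-\frac{\log n}{n^2}-\frac{15/16+\log(2\pi)}{n^2}\leq\frac2n.$$
   Context: $\log$ denotes the natural logarithm. *)

From Stdlib Require Import Reals Arith Factorial.
Open Scope R_scope.

(* ell n = (n!)^(1/n), the n-th root of n!, for n >= 1 (n! > 0 so Rpower is the usual power). *)
Definition ell (n : nat) : R := Rpower (INR (fact n)) (/ INR n).

Definition xseq (n : nat) : R := ln (ell (S n) / ell n).

(* With L_n = ln n! one has x_n = L_(n+1)/(n+1) - L_n/n.  Writing
   L_n = (n + 1/2) ln n - n + D_n, the sum x_(n+1) + x_n becomes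
   (n (ln(1 + 1/n) + ln(1 + 2/n)) - ln n + 2n - 2 D_n) / (n (n + 2)).
   Since ln((n+1)/n) = 2 artanh(1/(2n+1)), the series of artanh gives
   0 <= D_n - D_(n+1) <= 1/(12 n (n+1)), whence 11/12 <= D_n <= 1.
   Nonnegativity then follows from ln n <= n - 1.  For the upper bound, the
   cubic Taylor bound on ln(1+t) reduces everything to a margin
   n (1/16 + 2 D_n - ln(2 pi)) >= 0.057 n against 2 ln n + O(1), and
   ln n <= ln 271 + n/271 - 1 with numerical bounds on ln 271 and ln(2 pi)
   shows that this margin is positive for n >= 271. *)

From Stdlib Require Import Reals Lra Lia Factorial.
From Coquelicot Require Import Coquelicot.
Open Scope R_scope.

Lemma nondecr_function_le (f df : R -> R) (a b : R) : a <= b ->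
  (forall x, a <= x <= b -> is_derive f x (df x)) ->
  (forall x, a <= x <= b -> 0 <= df x) -> f a <= f b.
Proof.
intros Hab Hd Hdf.
destruct (MVT_gen f a b df) as [c [Hc Hmvt]].
- intros x Hx. rewrite Rmin_left, Rmax_right in Hx by lra. apply Hd; lra.
- intros x Hx. rewrite Rmin_left, Rmax_right in Hx by lra.
  apply continuity_pt_filterlim, (ex_derive_continuous (V := R_NormedModule)).
  exists (df x). apply Hd; lra.
- rewrite Rmin_left, Rmax_right in Hc by lra.
  assert (0 <= df c) by (apply Hdf; lra). nra.
Qed.

Lemma derive_nonneg_ge0 (f df : R -> R) (b : R) : 0 <= b -> f 0 = 0 ->
  (forall x, 0 <= x <= b -> is_derive f x (df x)) ->
  (forall x, 0 <= x <= b -> 0 <= df x) -> 0 <= f b.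
Proof. intros Hb H0 Hd Hdf. rewrite <- H0. exact (nondecr_function_le f df 0 b Hb Hd Hdf). Qed.

Lemma ln_le_sub1 (y : R) : 0 < y -> ln y <= y - 1.
Proof. intros Hy. assert (H := exp_ineq1_le (ln y)). rewrite exp_ln in H; lra. Qed.

Lemma ln_ge0 (y : R) : 1 <= y -> 0 <= ln y.
Proof. intros Hy. rewrite <- ln_1. apply ln_le; lra. Qed.

Lemma ln_1p_sub_ln_1m_ge (s : R) : 0 <= s < 1 -> 2 * s <= ln (1 + s) - ln (1 - s).
Proof.
intros Hs.
enough (0 <= ln (1 + s) - ln (1 - s) - 2 * s) by lra.
apply (derive_nonneg_ge0 (fun x => ln (1 + x) - ln (1 - x) - 2 * x)
  (fun x => 2 * x ^ 2 / ((1 + x) * (1 - x)))); [lra | | |].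
- rewrite Rplus_0_r, Rminus_0_r, ln_1. ring.
- intros x Hx. auto_derive; [lra|]. field. lra.
- intros x Hx. apply Rdiv_le_0_compat; nra.
Qed.

Lemma ln_1p_sub_ln_1m_le (s : R) : 0 <= s < 1 ->
  ln (1 + s) - ln (1 - s) <= 2 * s + 2 * s ^ 3 / (3 * (1 - s ^ 2)).
Proof.
intros Hs.
enough (0 <= 2 * s + 2 * s ^ 3 / (3 * (1 - s ^ 2)) - (ln (1 + s) - ln (1 - s))) by lra.
apply (derive_nonneg_ge0
  (fun x => 2 * x + 2 * x ^ 3 / (3 * (1 - x ^ 2)) - (ln (1 + x) - ln (1 - x)))
  (fun x => 4 * x ^ 4 / (3 * (1 - x ^ 2) ^ 2))); [lra | | |].
- rewrite Rplus_0_r, Rminus_0_r, ln_1. field.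
- intros x Hx. auto_derive; [repeat split; nra|]. field. repeat split; nra.
- intros x Hx. apply Rdiv_le_0_compat; [nra|].
  assert (0 < 1 - x ^ 2) by nra. nra.
Qed.

Lemma ln_1p_le (t : R) : 0 <= t -> ln (1 + t) <= t - t ^ 2 / 2 + t ^ 3 / 3.
Proof.
intros Ht.
enough (0 <= t - t ^ 2 / 2 + t ^ 3 / 3 - ln (1 + t)) by lra.
apply (derive_nonneg_ge0 (fun x => x - x ^ 2 / 2 + x ^ 3 / 3 - ln (1 + x))
  (fun x => x ^ 3 / (1 + x))); [lra | | |].
- rewrite Rplus_0_r, ln_1. field.
- intros x Hx. auto_derive; [lra|]. field. lra.
- intros x Hx. apply Rdiv_le_0_compat; [apply pow_le|]; lra.
Qed.

Lemma ln_ratio_le (s : R) : 0 <= s < 1 ->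
  ln ((1 + s) / (1 - s)) <= 2 * s + 2 * s ^ 3 / (3 * (1 - s ^ 2)).
Proof. intros Hs. rewrite ln_div by lra. now apply ln_1p_sub_ln_1m_le. Qed.

Lemma ln2_le : ln 2 <= 25 / 36.
Proof.
replace 2 with ((1 + / 3) / (1 - / 3)) by field.
eapply Rle_trans; [apply ln_ratio_le; lra | right; field].
Qed.

Lemma ln_5_4_le : ln (5 / 4) <= 241 / 1080.
Proof.
replace (5 / 4) with ((1 + / 9) / (1 - / 9)) by field.
eapply Rle_trans; [apply ln_ratio_le; lra | right; field].
Qed.

Lemma PI_le : PI <= 31416 / 10000.
Proof.
assert (H := proj2 (PI_2_3_7_ineq 2)).
unfold tg_alt, PI_2_3_7_tg, Ratan_seq in H. simpl in H. lra.
Qed.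

Lemma ln_2PI_le : ln (2 * PI) <= 919 / 500.
Proof.
(* (5/4)^8 * (1 + s)/(1 - s) with s = 33/1250 is about 6.28363, just above 2 PI. *)
assert (HPI := PI_le). assert (HPI0 := PI_RGT_0).
apply Rle_trans with (ln ((5 / 4) ^ 8 * ((1 + 33 / 1250) / (1 - 33 / 1250)))).
{ apply ln_le; lra. }
rewrite ln_mult, ln_pow by lra.
assert (H54 := ln_5_4_le). assert (Hr := ln_ratio_le (33 / 1250)).
simpl INR. lra.
Qed.

Lemma ln271_le : ln 271 <= 5779 / 1000.
Proof.
apply Rle_trans with (ln (2 ^ 8 * (5 / 4))); [apply ln_le; lra|].
rewrite ln_mult, ln_pow by lra.
assert (H2 := ln2_le). assert (H54 := ln_5_4_le). simpl INR. lra.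
Qed.

Definition lnfact (n : nat) : R := ln (INR (fact n)).

Definition stirling_rem (n : nat) : R := lnfact n - (INR n + / 2) * ln (INR n) + INR n.

Lemma lnfact_S (n : nat) : lnfact (S n) = ln (INR (S n)) + lnfact n.
Proof.
unfold lnfact. change (fact (S n)) with (S n * fact n)%nat.
rewrite mult_INR, ln_mult; [reflexivity | apply lt_0_INR; lia | apply INR_fact_lt_0].
Qed.

Lemma xseq_lnfact (n : nat) : xseq n = lnfact (S n) / INR (S n) - lnfact n / INR n.
Proof.
unfold xseq, ell, Rpower. rewrite ln_div by apply exp_pos.
rewrite !ln_exp. unfold lnfact, Rdiv. ring.
Qed.

Lemma mid_mul_ln_succ_bounds (N : R) : 0 < N ->
  1 <= (N + / 2) * (ln (N + 1) - ln N) <= 1 + / (12 * N * (N + 1)).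
Proof.
intros HN.
set (s := / (2 * N + 1)).
assert (Hs : 0 <= s < 1).
{ unfold s. split; [left; apply Rinv_0_lt_compat; lra|].
  rewrite <- Rinv_1. apply Rinv_lt_contravar; lra. }
assert (Els : ln (N + 1) - ln N = ln (1 + s) - ln (1 - s)).
{ rewrite <- !ln_div by lra. f_equal. unfold s. field. lra. }
assert (Elb : (N + / 2) * (2 * s) = 1) by (unfold s; field; lra).
assert (Eub : (N + / 2) * (2 * s + 2 * s ^ 3 / (3 * (1 - s ^ 2)))
              = 1 + / (12 * N * (N + 1))).
{ unfold s. field. repeat split; try lra. intro H. field_simplify in H; nra. }
rewrite Els. split.
- rewrite <- Elb at 1. apply Rmult_le_compat_l; [lra|]. now apply ln_1p_sub_ln_1m_ge.
- rewrite <- Eub. apply Rmult_le_compat_l; [lra|]. now apply ln_1p_sub_ln_1m_le.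
Qed.

Lemma stirling_rem_S (n : nat) :
  stirling_rem (S n) = stirling_rem n + 1 - (INR n + / 2) * (ln (INR n + 1) - ln (INR n)).
Proof. unfold stirling_rem. rewrite lnfact_S, S_INR. ring. Qed.

(* The lower bound carries the telescoping sum of the errors
   1/(12 N (N+1)) = 1/(12 N) - 1/(12 (N+1)). *)
Lemma stirling_rem_bounds (n : nat) : 11 / 12 + / (12 * INR (S n)) <= stirling_rem (S n) <= 1.
Proof.
induction n as [|n IH].
- unfold stirling_rem, lnfact. simpl. rewrite ln_1. split; [right; field | lra].
- rewrite stirling_rem_S, (S_INR (S n)).
  assert (HN : 0 < INR (S n)) by (apply lt_0_INR; lia).
  destruct (mid_mul_ln_succ_bounds (INR (S n)) HN) as [K1 K2].
  assert (/ (12 * INR (S n)) - / (12 * INR (S n) * (INR (S n) + 1))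
          = / (12 * (INR (S n) + 1))) by (field; lra).
  lra.
Qed.

Lemma stirling_rem_pos_bounds (n : nat) : (1 <= n)%nat -> 11 / 12 <= stirling_rem n <= 1.
Proof.
intros Hn. destruct n as [|m]; [lia|].
assert (0 < / (12 * INR (S m)))
  by (apply Rinv_0_lt_compat, Rmult_lt_0_compat; [lra | apply lt_0_INR; lia]).
assert (Hb := stirling_rem_bounds m). lra.
Qed.

Lemma xseq_sum_eq (n : nat) : (1 <= n)%nat ->
  xseq (S n) + xseq n =
  (INR n * (ln (1 + 1 / INR n) + ln (1 + 2 / INR n)) - ln (INR n) + 2 * INR n
   - 2 * stirling_rem n) / (INR n * (INR n + 2)).
Proof.
intros Hn.
assert (HN : 0 < INR n) by (apply lt_0_INR; lia).
rewrite !xseq_lnfact, !lnfact_S, !S_INR.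
assert (E1 : ln (INR n + 1) = ln (INR n) + ln (1 + 1 / INR n)).
{ rewrite <- ln_mult by (try apply Rplus_lt_le_0_compat; try apply Rdiv_le_0_compat; lra).
  f_equal. field. lra. }
assert (E2 : ln (INR n + 1 + 1) = ln (INR n) + ln (1 + 2 / INR n)).
{ rewrite <- ln_mult by (try apply Rplus_lt_le_0_compat; try apply Rdiv_le_0_compat; lra).
  f_equal. field. lra. }
rewrite E1, E2. unfold stirling_rem. field. lra.
Qed.

Lemma xseq_sum_ge0 (n : nat) : (1 <= n)%nat -> 0 <= xseq (S n) + xseq n.
Proof.
intros Hn. rewrite xseq_sum_eq by exact Hn.
assert (HN : 1 <= INR n) by (apply (le_INR 1); exact Hn).
assert (Ha : 0 <= ln (1 + 1 / INR n))
  by (apply ln_ge0; assert (0 <= 1 / INR n) by (apply Rdiv_le_0_compat; lra); lra).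
assert (Hb : 0 <= ln (1 + 2 / INR n))
  by (apply ln_ge0; assert (0 <= 2 / INR n) by (apply Rdiv_le_0_compat; lra); lra).
assert (Hl := ln_le_sub1 (INR n)).
assert (HD := stirling_rem_pos_bounds n Hn).
apply Rdiv_le_0_compat; nra.
Qed.

Lemma sq_mul_ln_1p_le (N c : R) : 0 < N -> 0 <= c ->
  N ^ 2 * ln (1 + c / N) <= c * N - c ^ 2 / 2 + c ^ 3 / (3 * N).
Proof.
intros HN Hc.
apply Rle_trans with (N ^ 2 * (c / N - (c / N) ^ 2 / 2 + (c / N) ^ 3 / 3)).
- apply Rmult_le_compat_l; [nra|]. apply ln_1p_le, Rdiv_le_0_compat; lra.
- right. field. lra.
Qed.

Lemma xseq_sum_numerator_le (N D : R) : 271 <= N -> 11 / 12 <= D ->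
  N ^ 2 * ln (1 + 1 / N) + N ^ 2 * ln (1 + 2 / N) - N * ln N + 2 * N ^ 2 - 2 * N * D
  <= (2 * N - ln N - 15 / 16 - ln (2 * PI)) * (N + 2).
Proof.
intros HN HD.
assert (Ha := sq_mul_ln_1p_le N 1 ltac:(lra) ltac:(lra)).
assert (Hb := sq_mul_ln_1p_le N 2 ltac:(lra) ltac:(lra)).
assert (Hu : 0 < / N <= / 271) by (split; [apply Rinv_0_lt_compat | apply Rinv_le_contravar]; lra).
assert (Hl : ln N <= ln 271 + (N / 271 - 1)).
{ replace (ln N) with (ln 271 + ln (N / 271)) by (rewrite <- ln_mult by lra; f_equal; field).
  assert (H := ln_le_sub1 (N / 271)). lra. }
assert (H271 := ln271_le). assert (HP := ln_2PI_le).
replace (1 ^ 3 / (3 * N)) with (/ N / 3) in Ha by (field; lra).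
replace (2 ^ 3 / (3 * N)) with (8 * / N / 3) in Hb by (field; lra).
assert (HND : N * (11 / 12) <= N * D) by (apply Rmult_le_compat_l; lra).
assert (HNP : N * ln (2 * PI) <= N * (919 / 500)) by (apply Rmult_le_compat_l; lra).
lra.
Qed.

Lemma xseq_sum_le (n : nat) : (271 <= n)%nat ->
  xseq (S n) + xseq n <=
    2 / INR n - ln (INR n) / (INR n ^ 2) - (15 / 16 + ln (2 * PI)) / (INR n ^ 2).
Proof.
intros Hn.
assert (HN : 271 <= INR n) by (apply (le_INR 271) in Hn; simpl in Hn; lra).
assert (HD := stirling_rem_pos_bounds n ltac:(lia)).
assert (Hnum := xseq_sum_numerator_le (INR n) (stirling_rem n) HN (proj1 HD)).
rewrite xseq_sum_eq by lia.
set (N := INR n) in *.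
apply Rmult_le_reg_r with (N ^ 2 * (N + 2)); [nra|].
replace (_ / (N * (N + 2)) * (N ^ 2 * (N + 2))) with
  (N ^ 2 * ln (1 + 1 / N) + N ^ 2 * ln (1 + 2 / N) - N * ln N + 2 * N ^ 2 - 2 * N * stirling_rem n)
  by (field; lra).
replace ((2 / N - ln N / N ^ 2 - (15 / 16 + ln (2 * PI)) / N ^ 2) * (N ^ 2 * (N + 2))) with
  ((2 * N - ln N - 15 / 16 - ln (2 * PI)) * (N + 2)) by (field; lra).
exact Hnum.
Qed.

Theorem mainTheorem9 : forall n : nat, (271 <= n)%nat ->
  0 <= xseq (S n) + xseq n /\
  xseq (S n) + xseq n <=
    2 / INR n - ln (INR n) / (INR n ^ 2) - (15 / 16 + ln (2 * PI)) / (INR n ^ 2) /\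
  2 / INR n - ln (INR n) / (INR n ^ 2) - (15 / 16 + ln (2 * PI)) / (INR n ^ 2) <= 2 / INR n.
Proof.
intros n Hn.
assert (HN : 271 <= INR n) by (apply (le_INR 271) in Hn; simpl in Hn; lra).
assert (Hl : 0 <= ln (INR n)) by (apply ln_ge0; lra).
assert (HP : 0 <= ln (2 * PI)) by (apply ln_ge0; assert (H := PI2_3_2); lra).
assert (0 <= ln (INR n) / INR n ^ 2) by (apply Rdiv_le_0_compat; nra).
assert (0 <= (15 / 16 + ln (2 * PI)) / INR n ^ 2) by (apply Rdiv_le_0_compat; nra).
split; [|split].
- apply xseq_sum_ge0. lia.
- now apply xseq_sum_le.
- lra.
Qed.
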